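(* There are absolute constants $c>0$ and $c'>0$ such that for every integer $n\ge 3$ and every real $\epsilon$ with $\frac1n \le \epsilon \le \frac{1}{\log_2 n}$, there exists an $\epsilon$-distance-uniform graph on $n$ vertices whose critical distance $d$ satisfies \[ d \ge c'\, 2^{c\,\frac{\log n}{\log \epsilon^{-1}}}. \] (In the paper's notation: $d = 2^{\Omega\left(\frac{\log n}{\log \epsilon^{-1}}\right)}$.)
   Context: For a parameter $\epsilon>0$, an $n$-vertex graph $G$ is called $\epsilon$-distance-uniform if there is a value $d$, called the critical distance, such that for every vertex $v$, all but at most $\epsilon n$ of the other vertices are at graph distance exactly $d$ from $v$. The ratio $\frac{\log n}{\log \epsilon^{-1}}$ does not depend on the base of the logarithm. *)

From mathcomp Require Import all_boot.
From Stdlib Require Import Reals.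

Set Implicit Arguments.
Unset Strict Implicit.
Unset Printing Implicit Defensive.

Definition simple_graph (n : nat) (e : rel 'I_n) : Prop :=
  symmetric e /\ irreflexive e.

Definition dist_is (n : nat) (e : rel 'I_n) (x y : 'I_n) (d : nat) : Prop :=
  (exists p : seq 'I_n, [/\ path e x p, last x p = y & size p = d]) /\
  (forall p : seq 'I_n, path e x p -> last x p = y -> (d <= size p)%N).

Definition critical_distance (n : nat) (e : rel 'I_n) (eps : R) (d : nat) : Prop :=
  forall v : 'I_n, exists S : {set 'I_n},
    (INR #|S| <= eps * INR n)%R /\
    (forall w : 'I_n, w != v -> w \notin S -> dist_is e v w d).

Definition distance_uniform (n : nat) (e : rel 'I_n) (eps : R) : Prop :=
  exists d : nat, critical_distance e eps d.

(* The graph is a blow-up of the Sierpinski graph S(k, m), whose vertices are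
   the words of length k over an m-letter alphabet: vertex i stands for its k
   lowest base-m digits.  The distance from a word g to the extreme vertex
   w...w is sum_t [g_t != w] 2^t, and this potential changes by at most one
   along an edge.  S(k, m) consists of m copies of S(k-1, m), one per top
   letter, joined by single bridges.  A walk between two words x, y in general
   position (no letter repeated at the relevant places) has to leave the copy
   of x, and comparing potentials at both ends of the last bridge it takes out
   of that copy (and, if this leads to a third copy, of the last bridge out
   of that one) shows that it has at least 2^k - 1 edges; an explicit walk
   attains this.  A vertex is in general position with all but O(k n / m)
   others, so m ~ 6 eps^-2 and k = floor(log_m n) >= log n / (7 log eps^-1)
   give an eps-distance-uniform graph with critical distance 2^k - 1 (for
   k = 0, the complete graph with critical distance 1). *)

From mathcomp Require Import all_boot zify.
From Stdlib Require Import Reals Lra.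
(* Reals rebinds [^] on [nat] to [Nat.pow]; restore [expn]. *)
Import ssrnat.

Set Implicit Arguments.
Unset Strict Implicit.
Unset Printing Implicit Defensive.

Lemma last_exit (A : Type) (P : pred A) x p : P x -> ~~ P (last x p) ->
  exists p1 z p2, [/\ p = p1 ++ z :: p2, P (last x p1) & all (predC P) (z :: p2)].
Proof.
elim/last_ind: p => [|p z IH] Px; rewrite ?last_rcons => Pz; first by rewrite Px in Pz.
have [Pl | nPl] := boolP (P (last x p)).
- by exists p, z, [::]; rewrite cats1 /= Pz.
- have [p1 [z1 [p2 [-> Pl1 out]]]] := IH Px nPl.
  by exists p1, z1, (rcons p2 z); rewrite rcons_cat /= all_rcons /= Pz.
Qed.

Lemma leq_card_bigcup (I T : finType) (P : pred I) (U : I -> {set T}) :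
  #|\bigcup_(i | P i) U i| <= \sum_(i | P i) #|U i|.
Proof.
elim/big_ind2: _ => [|m A n B leA leB|//]; first by rewrite cards0.
exact: leq_trans (leq_card_setU A B).1 (leq_add leA leB).
Qed.

Section Sierpinski.

Variable T : eqType.
Implicit Types (g h x y z : nat -> T) (w : T).

Definition eq_below (k : nat) g h := forall t, t < k -> g t = h t.

(* Letter [t] of a word [g] is [g t], the top letter being [g k.-1]; only the
   letters below [k] matter.  This is S(k, T) with the letters read in reverse. *)
Definition sierpinski (k : nat) : rel (nat -> T) := fun g h =>
  [exists l : 'I_k, [&& g l != h l,
     [forall t : 'I_k, (l < t) ==> (g t == h t)] &
     [forall t : 'I_k, (t < l) ==> (g t == h l) && (h t == g l)]]].

Lemma sierpinskiP k g h : reflect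
  (exists l, [/\ l < k, g l != h l, forall t, l < t < k -> g t = h t
                & forall t, t < l -> g t = h l /\ h t = g l])
  (sierpinski k g h).
Proof.
apply: (iffP existsP) => [[l /and3P[ne /forallP up /forallP lo]] | [l [lk ne up lo]]].
- exists l; split => // [t /andP[lt tk] | t tl].
  + by apply/eqP; have /implyP := up (Ordinal tk); apply.
  + have tk : t < k := ltn_trans tl (ltn_ord l).
    by have /implyP/(_ tl)/andP[/eqP -> /eqP ->] := lo (Ordinal tk).
- exists (Ordinal lk); apply/and3P; split => //.
  + by apply/forallP => t; apply/implyP => lt; apply/eqP/up; rewrite lt ltn_ord.
  + by apply/forallP => t; apply/implyP => /lo[-> ->]; rewrite !eqxx.
Qed.

Lemma sierpinski_sym k : symmetric (sierpinski k).
Proof.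
suff imp g h : sierpinski k g h -> sierpinski k h g.
  by move=> g h; apply/idP/idP; apply: imp.
case/sierpinskiP => l [lk ne up lo]; apply/sierpinskiP; exists l; split => //.
- by rewrite eq_sym.
- by move=> t /up.
- by move=> t /lo[-> ->].
Qed.

Lemma sierpinski_irr k : irreflexive (sierpinski k).
Proof. by move=> g; apply/sierpinskiP => -[l []]; rewrite eqxx. Qed.

Lemma eq_sierpinski k g g' h h' : eq_below k g g' -> eq_below k h h' ->
  sierpinski k g h = sierpinski k g' h'.
Proof.
move=> eg eh; apply: eq_existsb => l; rewrite !eg ?eh //.
by congr [&& _, _ & _]; apply: eq_forallb => t; rewrite !eg ?eh.
Qed.

Definition general_position (K : nat) x y :=
  [forall t : 'I_K.+1, [&& x t != y t, x t != y K & y t != x K]].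

Lemma general_positionP K x y : reflect
  (forall t, t <= K -> [/\ x t != y t, x t != y K & y t != x K])
  (general_position K x y).
Proof.
apply: (iffP forallP) => [gp t tK | gp t]; last by apply/and3P/gp; rewrite -ltnS.
by apply/and3P; apply: (gp (Ordinal (tK : t < K.+1))).
Qed.

(* The distance from [g] to the extreme vertex [w...w] of S(l, T)
   (Klavzar and Milutinovic). *)
Fixpoint corner_dist (l : nat) w g : nat :=
  if l is l'.+1 then corner_dist l' w g + (g l' != w) * 2 ^ l' else 0.

Lemma corner_dist_const l w g c : (forall t, t < l -> g t = c) ->
  corner_dist l w g = (c != w) * (2 ^ l).-1.
Proof.
elim: l => [|l IH] gc /=; first by rewrite muln0.
rewrite IH => [|t tl]; last exact/gc/ltnW.
rewrite gc // expnS; have := expn_gt0 2 l; case: (c != w) => /=; lia.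
Qed.

Lemma corner_dist_far l w g : (forall t, t < l -> g t != w) ->
  corner_dist l w g = (2 ^ l).-1.
Proof.
elim: l => [|l IH] gw //=; rewrite IH => [|t tl]; last exact/gw/ltnW.
rewrite gw // expnS; have := expn_gt0 2 l; lia.
Qed.

Lemma corner_dist_lt l w g : corner_dist l w g < 2 ^ l.
Proof. by elim: l => //= l IH; rewrite expnS; case: (g l != w) => /=; lia. Qed.

Lemma corner_dist_disjoint l w g h : (forall t, t < l -> g t != h t) ->
  (2 ^ l).-1 <= corner_dist l w g + corner_dist l w h.
Proof.
elim: l => [|l IH] gh //=; have := IH (fun t tl => gh t (ltnW tl)).
have ghl := gh l (ltnSn l); have := expn_gt0 2 l; rewrite expnS.
case: (g l =P w) => [gw|_]; case: (h l =P w) => [hw|_] /=; try lia.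
by rewrite gw hw eqxx in ghl.
Qed.

Lemma corner_dist_adj k w g h : sierpinski k g h ->
  corner_dist k w g <= (corner_dist k w h).+1.
Proof.
case/sierpinskiP => l [lk _ up lo].
suff /(_ k): forall L, l < L <= k ->
    corner_dist L w g + (h l != w) = corner_dist L w h + (g l != w).
  by rewrite lk leqnn => /(_ isT); case: (g l != w); case: (h l != w) => /=; lia.
elim=> // L IH /andP[]; rewrite ltnS leq_eqVlt => /orP[/eqP <- _ | lL Lk] /=.
- rewrite (corner_dist_const _ (fun t tl => (lo t tl).1)).
  rewrite (corner_dist_const _ (fun t tl => (lo t tl).2)).
  by have := expn_gt0 2 l; case: (g l != w); case: (h l != w) => /=; lia.
- by rewrite up ?lL //; have := IH; rewrite lL ltnW //=; lia.
Qed.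

Lemma corner_dist_path k w g p : path (sierpinski k) g p ->
  corner_dist k w g <= corner_dist k w (last g p) + size p /\
  corner_dist k w (last g p) <= corner_dist k w g + size p.
Proof.
elim: p g => [|h p IH] g /=; first by rewrite addn0.
move=> /andP[gh /IH[le1 le2]].
have hg : sierpinski k h g by rewrite sierpinski_sym.
by have := corner_dist_adj w gh; have := corner_dist_adj w hg; lia.
Qed.

Definition fill_below (l : nat) w g : nat -> T :=
  fun t => if t < l then w else g t.

Definition flip_at (l : nat) w g : nat -> T :=
  fun t => if t < l then g l else if t == l then w else g t.

Fixpoint corner_walk (l : nat) w g : seq (nat -> T) :=
  if l is l'.+1 then
    if g l' == w then corner_walk l' w g
    else corner_walk l' w g ++ flip_at l' w g :: corner_walk l' w (flip_at l' w g)
  else [::].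

Lemma last_corner_walk l w g : last g (corner_walk l w g) =1 fill_below l w g.
Proof.
elim: l g => [|l IH] g t /=; first by rewrite /fill_below.
rewrite /fill_below ltnS leq_eqVlt; case: eqP => [gl | _].
  by rewrite IH /fill_below; case: ltngtP => // ->.
rewrite last_cat /= IH /fill_below /flip_at.
by case: ltngtP.
Qed.

Lemma size_corner_walk l w g : size (corner_walk l w g) = corner_dist l w g.
Proof.
elim: l g => //= l IH g; case: eqP => [_ | /eqP gl]; first by rewrite IH mul0n addn0.
rewrite size_cat /= !IH (@corner_dist_far l w (flip_at l w g)).
  by have := expn_gt0 2 l; lia.
by move=> t tl; rewrite /flip_at tl.
Qed.

Lemma sierpinski_fill_flip k l w g : l < k -> g l != w ->
  sierpinski k (fill_below l w g) (flip_at l w g).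
Proof.
move=> lk gl; apply/sierpinskiP; exists l; rewrite /fill_below /flip_at ltnn eqxx.
split=> // [t /andP[lt _] | t ->]; last by [].
by rewrite ltnNge (ltnW lt) /= gtn_eqF.
Qed.

Lemma corner_walk_path k l w g : l <= k -> path (sierpinski k) g (corner_walk l w g).
Proof.
elim: l g => //= l IH g lk; case: eqP => [_ | /eqP gl]; first exact/IH/ltnW.
rewrite cat_path /= !IH ?(ltnW lk) // andbT.
rewrite (@eq_sierpinski _ _ (fill_below l w g) _ (flip_at l w g)) //.
  exact: sierpinski_fill_flip.
by move=> t _; rewrite last_corner_walk.
Qed.

Lemma exists_sierpinski_walk K x y : general_position K x y ->
  exists p, [/\ path (sierpinski K.+1) x p, last x p = y & size p = (2 ^ K.+1).-1].
Proof.
move=> /general_positionP gp; have [xy _ _] := gp K (leqnn K).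
(* Walk to the corner of the copy of [x] facing [y K], take the bridge, and
   follow the walk from [y] to the corner of its copy facing [x K] backwards. *)
set W1 := corner_walk K (y K) x; set W2 := corner_walk K (x K) y.
exists (W1 ++ rev (y :: W2)); split.
- rewrite cat_path corner_walk_path //= lastI rev_rcons /= rev_path.
  rewrite (@eq_sierpinski _ _ (fill_below K (y K) x) _ (flip_at K (y K) x)).
  + rewrite sierpinski_fill_flip //=.
    rewrite (eq_path (e' := sierpinski K.+1)); first exact: corner_walk_path.
    by move=> g h /=; rewrite sierpinski_sym.
  + by move=> t _; rewrite last_corner_walk.
  + move=> t tK; rewrite last_corner_walk /fill_below /flip_at.
    by case: ltngtP => // [Kt | ->] //; lia.
- by rewrite last_cat rev_cons last_rcons.
- rewrite size_cat size_rev /= !size_corner_walk !corner_dist_far.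
  + by rewrite expnS; have := expn_gt0 2 K; lia.
  + by move=> t tK; have [] := gp t (ltnW tK).
  + by move=> t tK; have [] := gp t (ltnW tK).
Qed.

Lemma sierpinski_bridge K g h : sierpinski K.+1 g h -> g K != h K ->
  forall t, t < K -> g t = h K /\ h t = g K.
Proof.
case/sierpinskiP => l [lk _ up lo] gh t tK.
have [lK | Kl] := ltnP l K; first by rewrite up ?lK ?ltnSn ?eqxx in gh.
have eK : l = K by lia.
by rewrite -eK in tK *; apply: lo.
Qed.

Lemma sierpinski_last_exit K x p : path (sierpinski K.+1) x p -> last x p K != x K ->
  exists p1 z p2, [/\ p = p1 ++ z :: p2, last x p1 K = x K,
    all (fun g => g K != x K) (z :: p2) &
    forall t, t < K -> last x p1 t = z K /\ z t = x K].
Proof.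
move=> xp xpK.
have [p1 [z [p2 [def_p /eqP top out]]]] :=
  last_exit (P := fun g => g K == x K) (eqxx _) xpK.
exists p1, z, p2; split => //; rewrite -top; apply: sierpinski_bridge.
  by move: xp; rewrite def_p cat_path /= => /and3P[].
by rewrite top eq_sym; case/andP: out.
Qed.

Lemma walk_to_copy_corner_ge K w x p : path (sierpinski K.+1) x p ->
  last x p K = x K -> (forall t, t < K -> last x p t = w) ->
  corner_dist K w x <= size p.
Proof.
move=> xp top low; have [+ _] := corner_dist_path w xp => /=.
by rewrite top (corner_dist_const _ low) eqxx; lia.
Qed.

Lemma walk_from_copy_corner_ge K w x p : path (sierpinski K.+1) x p ->
  (forall t, t < K -> x t = w) -> last x p K = x K ->
  corner_dist K w (last x p) <= size p.
Proof.
move=> xp low top; have [_] := corner_dist_path w xp => /=.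
by rewrite top (corner_dist_const _ low) eqxx; lia.
Qed.

Lemma walk_between_copies_ge K x p : path (sierpinski K.+1) x p ->
  last x p K != x K -> (forall t, t < K -> x t != last x p K) ->
  2 ^ K <= size p.
Proof.
move=> xp xpK far; have [+ _] := corner_dist_path (last x p K) xp => /=.
rewrite corner_dist_far // eqxx eq_sym xpK.
by have := corner_dist_lt K (last x p K) (last x p); have := expn_gt0 2 K; lia.
Qed.

Lemma walk_through_copy_ge K a z p : path (sierpinski K.+1) z p ->
  last z p K != z K -> (forall t, t < K -> z t = a) -> all (fun g => g K != a) p ->
  2 ^ K + corner_dist K (z K) (last z p) <= size p.
Proof.
move=> zp zpK low out.
have [q1 [z' [q2 [def_p top _ br]]]] := sierpinski_last_exit zp zpK.
move: zp out zpK; rewrite def_p cat_path all_cat last_cat size_cat /=.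
move=> /and3P[zq1 _ zq2] /and3P[_ z'a _] zpK.
have L1 : (2 ^ K).-1 <= size q1.
  rewrite -(@corner_dist_far K (z' K) z) => [|t tK]; last by rewrite low // eq_sym.
  exact: walk_to_copy_corner_ge zq1 top (fun t tK => (br t tK).1).
have [z'_last | z'_last] := eqVneq (z' K) (last z' q2 K).
- have := walk_from_copy_corner_ge zq2 (fun t tK => (br t tK).2) (esym z'_last).
  by have := expn_gt0 2 K; lia.
- have far t : t < K -> z' t != last z' q2 K.
    by move=> tK; rewrite (br t tK).2 eq_sym.
  have last_z' : last z' q2 K != z' K by rewrite eq_sym.
  have := walk_between_copies_ge zq2 last_z' far.
  by have := corner_dist_lt K (z K) (last z' q2); lia.
Qed.

Lemma sierpinski_walk_size_ge K x p : general_position K x (last x p) ->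
  path (sierpinski K.+1) x p -> (2 ^ K.+1).-1 <= size p.
Proof.
move=> /general_positionP gp xp.
have xpK : last x p K != x K by have [] := gp K (leqnn K); rewrite eq_sym.
(* After the last exit from the copy of [x], the walk never returns to it. *)
have [p1 [z [p2 [def_p top /andP[_ out] br]]]] := sierpinski_last_exit xp xpK.
move: xp gp; rewrite def_p cat_path last_cat size_cat expnS /=.
move=> /and3P[xp1 _ zp2] gp.
have L1 := walk_to_copy_corner_ge xp1 top (fun t tK => (br t tK).1).
have [z_last | z_last] := eqVneq (z K) (last z p2 K).
- have L2 := walk_from_copy_corner_ge zp2 (fun t tK => (br t tK).2) (esym z_last).
  rewrite z_last corner_dist_far in L1; last by move=> t tK; have [] := gp t (ltnW tK).
  rewrite corner_dist_far in L2; last by move=> t tK; have [] := gp t (ltnW tK).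
  by have := expn_gt0 2 K; lia.
- have zp2K : last z p2 K != z K by rewrite eq_sym.
  have L2 := walk_through_copy_ge zp2 zp2K (fun t tK => (br t tK).2) out.
  have : (2 ^ K).-1 <= corner_dist K (z K) x + corner_dist K (z K) (last z p2).
    by apply: corner_dist_disjoint => t tK; have [] := gp t (ltnW tK).
  by have := expn_gt0 2 K; lia.
Qed.

End Sierpinski.

Section DigitGraph.

Variables (m : nat) (m_gt0 : 0 < m).

Definition digit (t i : nat) : 'I_m := Ordinal (ltn_pmod (i %/ m ^ t) m_gt0).

(* Vertices with the same [k] lowest digits are non-adjacent twins. *)
Definition digit_graph (k n : nat) : rel 'I_n :=
  relpre (fun i : 'I_n => digit^~ i) (sierpinski k).
Arguments digit_graph : clear implicits.

Lemma digit_graph_simple k n : simple_graph (digit_graph k n).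
Proof.
by split=> [i j | i]; rewrite /digit_graph /= ?sierpinski_irr // sierpinski_sym.
Qed.

Fixpoint from_digits (k : nat) (h : nat -> 'I_m) : nat :=
  if k is k'.+1 then h 0 + m * from_digits k' (fun t => h t.+1) else 0.

Lemma from_digits_lt k h : from_digits k h < m ^ k.
Proof.
elim: k h => [|k IH] h //=; have := IH (fun t => h t.+1); have := ltn_ord (h 0).
by rewrite expnS; nia.
Qed.

Lemma digit_from_digits k h t : t < k -> digit t (from_digits k h) = h t.
Proof.
elim: k h t => // k IH h [_ | t tk]; apply: val_inj => /=.
  by rewrite expn0 divn1 addnC mulnC modnMDl modn_small.
rewrite expnS divnMA addnC mulnC divnMDl // (divn_small (ltn_ord _)) addn0.
by have /(congr1 val) := IH (fun t => h t.+1) t tk.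
Qed.

Lemma lift_sierpinski_walk k n (i j : 'I_n) g s : m ^ k <= n ->
  eq_below k (digit^~ i) g -> path (sierpinski k) g s -> last g s = digit^~ j ->
  0 < size s ->
  exists p, [/\ path (digit_graph k n) i p, last i p = j & size p = size s].
Proof.
move=> mn; elim: s g i => // h s IH g i ig /= /andP[gh hs] hl _.
case: s IH hs hl => [|h' s] IH hs hl.
  exists [:: j]; split => //=; rewrite andbT /digit_graph /= -hl.
  by rewrite (eq_sierpinski ig (fun _ _ => erefl)).
pose v := insubd i (from_digits k h).
have vh : eq_below k (digit^~ v) h.
  move=> t tk; rewrite val_insubd (leq_trans (from_digits_lt k h) mn).
  exact: digit_from_digits.
have [p [vp pl ps]] := IH h v vh hs hl isT.
exists (v :: p); rewrite /= vp pl ps; split => //.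
by rewrite andbT /digit_graph /= (eq_sierpinski ig vh).
Qed.

Lemma digit_graph_dist K n (i j : 'I_n) : m ^ K.+1 <= n ->
  general_position K (digit^~ i) (digit^~ j) ->
  dist_is (digit_graph K.+1 n) i j (2 ^ K.+1).-1.
Proof.
move=> mn gp; split.
  have [s [xs sl ss]] := exists_sierpinski_walk gp.
  have s0 : 0 < size s by rewrite ss expnS; have := expn_gt0 2 K; lia.
  have [p [ip pl ps]] := lift_sierpinski_walk mn (fun _ _ => erefl) xs sl s0.
  by exists p; rewrite ps ss.
move=> p ip pl; rewrite -(size_map (fun v : 'I_n => digit^~ v)).
apply: (sierpinski_walk_size_ge (x := digit^~ i)).
  by rewrite (last_map (fun v : 'I_n => digit^~ v) p i) pl.
by rewrite path_map.
Qed.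

Lemma digit_decomp t i :
  i = i %/ m ^ t.+1 * m ^ t.+1 + digit t i * m ^ t + i %% m ^ t.
Proof.
rewrite /= expnSr divnMA {1}(divn_eq i (m ^ t)) {1}(divn_eq (i %/ m ^ t) m).
by rewrite mulnDl -mulnA (mulnC m).
Qed.

Lemma card_digit_eq t n (c : 'I_m) : m ^ t.+1 <= n ->
  #|[set j : 'I_n | digit t j == c]| <= 2 * (n %/ m).
Proof.
(* [j] is determined by its digits above and below [t]. *)
move=> mn; set q := n %/ m ^ t.+1.
have mt_gt0 : 0 < m ^ t by rewrite expn_gt0 m_gt0.
have jq (j : 'I_n) : j %/ m ^ t.+1 < q.+1 by rewrite ltnS leq_div2r // ltnW.
pose f (j : 'I_n) : 'I_q.+1 * 'I_(m ^ t) :=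
  (inord (j %/ m ^ t.+1), Ordinal (ltn_pmod j mt_gt0)).
have f_inj : {in [set j : 'I_n | digit t j == c] &, injective f}.
  move=> j1 j2; rewrite !inE => /eqP d1 /eqP d2 [].
  move=> /(congr1 val); rewrite /= !inordK // => eq_q eq_r; apply: val_inj => /=.
  by rewrite (digit_decomp t j1) (digit_decomp t j2) eq_q eq_r d1 d2.
have := @leq_card_in _ _ f _ f_inj; rewrite card_prod !card_ord.
have q_gt0 : 0 < q by rewrite divn_gt0 ?expn_gt0 ?m_gt0.
have : q * m ^ t <= n %/ m by rewrite leq_divRL // -mulnA -expnSr leq_trunc_div.
by nia.
Qed.

Lemma card_not_general_position K n (i : 'I_n) : m ^ K.+1 <= n ->
  #|[set j : 'I_n | ~~ general_position K (digit^~ i) (digit^~ j)]|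
    <= K.+1 * (6 * (n %/ m)).
Proof.
move=> mn; pose D t c := [set j : 'I_n | digit t j == c].
pose U (t : 'I_K.+1) := D t (digit t i) :|: D K (digit t i) :|: D t (digit K i).
have cardD t c : t <= K -> #|D t c| <= 2 * (n %/ m).
  by move=> tK; apply/card_digit_eq/(leq_trans _ mn); rewrite leq_pexp2l // ltnS.
have cardU t : #|U t| <= 6 * (n %/ m).
  have tK : t <= K by rewrite -ltnS.
  apply: leq_trans (leq_card_setU _ _).1 _.
  apply: leq_trans (leq_add (leq_card_setU _ _).1 (leqnn _)) _.
  by have := cardD _ (digit t i) tK; have := cardD _ (digit t i) (leqnn K);
     have := cardD _ (digit K i) tK; lia.
have bad_sub : [set j : 'I_n | ~~ general_position K (digit^~ i) (digit^~ j)]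
    \subset \bigcup_(t < K.+1) U t.
  apply/subsetP => j; rewrite inE => /forallPn[t]; rewrite !negb_and !negbK => bad.
  apply/bigcupP; exists t => //.
  by rewrite !inE (eq_sym (digit t j)) (eq_sym (digit K j)) -orbA.
apply: leq_trans (subset_leq_card bad_sub) _.
apply: leq_trans (leq_card_bigcup _ _) _.
apply: (@leq_trans (\sum_(t < K.+1) 6 * (n %/ m))); first exact: leq_sum.
by rewrite sum_nat_const card_ord.
Qed.

End DigitGraph.

Lemma exists_distance_uniform_graph m n : 1 < m -> 0 < n ->
  exists (e : rel 'I_n) (d : nat),
    [/\ simple_graph e, 0 < d, 2 ^ trunc_log m n <= d.+1 &
      forall v, exists S : {set 'I_n}, #|S| <= trunc_log m n * (6 * (n %/ m)) /\
        forall w, w != v -> w \notin S -> dist_is e v w d].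
Proof.
move=> m_gt1 n_gt0; have m_gt0 := ltnW m_gt1.
have := trunc_logP m_gt1 n_gt0; case: (trunc_log m n) => [_ | K mn].
  exists [rel i j : 'I_n | i != j], 1; split=> // [|v].
    by split=> [i j | i] /=; rewrite ?eqxx // eq_sym.
  exists set0; rewrite cards0; split=> // w wv _; split.
    by exists [:: w]; rewrite /= eq_sym wv.
  by case=> //= _ wv_eq; rewrite wv_eq eqxx in wv.
exists (@digit_graph m m_gt0 K.+1 n), (2 ^ K.+1).-1; split.
- exact: digit_graph_simple.
- by rewrite expnS; have := expn_gt0 2 K; lia.
- by rewrite prednK // expn_gt0.
- move=> v.
  exists [set w : 'I_n | ~~ general_position K (digit m_gt0 ^~ v) (digit m_gt0 ^~ w)].
  split; first exact: card_not_general_position.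
  by move=> w _; rewrite inE negbK; apply: digit_graph_dist.
Qed.

Section RealBounds.

Local Open Scope R_scope.

Lemma leq_INR (a b : nat) : (a <= b)%N -> INR a <= INR b.
Proof. by move/leP/le_INR. Qed.

Lemma INR_expn (a b : nat) : INR (a ^ b) = INR a ^ b.
Proof. by elim: b => // b IH; rewrite expnS -multE mult_INR IH. Qed.

Lemma ln_le_ln x y : 0 < x -> x <= y -> ln x <= ln y.
Proof. by move=> x_gt0 [xy | <-]; [left; apply: ln_increasing | right]. Qed.

Lemma ln2_gt0 : 0 < ln 2.
Proof. by rewrite -ln_1; apply: ln_increasing; lra. Qed.

Lemma Rle_div_pos a b c : 0 < c -> a * c <= b -> a <= b / c.
Proof.
move=> c_gt0 le; apply: (Rmult_le_reg_r c) => //.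
by rewrite /Rdiv Rmult_assoc Rinv_l; lra.
Qed.

Lemma log2_ge_3_2 (n : nat) : (3 <= n)%N -> 3 / 2 <= ln (INR n) / ln 2.
Proof.
move=> n_ge3; have ln2 := ln2_gt0.
have n3 : 3 <= INR n by have := leq_INR n_ge3; simpl; lra.
have ln3 : ln 3 <= ln (INR n) by apply: ln_le_ln; lra.
have : ln (2 ^ 3) <= ln (3 ^ 2) by apply: ln_le_ln; simpl; lra.
rewrite !ln_pow /=; try lra.
by move=> le98; apply: Rle_div_pos; lra.
Qed.

Lemma inv_eps_ge_log2 (n : nat) (eps : R) : (3 <= n)%N -> / INR n <= eps ->
  eps <= / (ln (INR n) / ln 2) -> 0 < eps /\ ln (INR n) / ln 2 <= / eps.
Proof.
move=> n_ge3 eps_ge eps_le.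
have eps_gt0 : 0 < eps.
  apply: Rlt_le_trans eps_ge.
  by apply/Rinv_0_lt_compat/lt_0_INR/ltP/(leq_trans _ n_ge3).
split=> //; rewrite -(Rinv_inv (ln (INR n) / ln 2)).
by apply: Rinv_le_contravar.
Qed.

Lemma exists_base (u : R) : 3 / 2 <= u ->
  exists m : nat, [/\ (1 < m)%N, 6 * u * u <= INR m & ln (INR m) <= 7 * ln u].
Proof.
move=> u_ge; have [up_gt up_le] := archimed (6 * u * u).
have up_ge0 : (0 <= up (6 * u * u))%Z by apply: le_IZR; nra.
set m := Z.to_nat (up (6 * u * u)); exists m.
have m_up : INR m = IZR (up (6 * u * u)) by rewrite INR_IZR_INZ Znat.Z2Nat.id.
have u5 : 7 <= u ^ 5 by have := pow_incr (3 / 2) u 5; simpl; lra.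
split; [apply/ltP/INR_lt; rewrite m_up /=; nra | lra |].
have u7 : 7 * (u * u) <= u ^ 7.
  rewrite (_ : u ^ 7 = u ^ 5 * (u * u)); last by ring.
  by apply: Rmult_le_compat_r; nra.
have -> : 7 * ln u = ln (u ^ 7) by rewrite ln_pow /=; lra.
by apply: ln_le_ln; rewrite m_up; nra.
Qed.

Lemma trunc_log_le_log2 (m n : nat) : (1 < m)%N -> (0 < n)%N ->
  INR (trunc_log m n) <= ln (INR n) / ln 2.
Proof.
move=> m_gt1 n_gt0; set k := trunc_log m n; have ln2 := ln2_gt0.
have pow_le : 2 ^ k <= INR n.
  apply: Rle_trans (leq_INR (trunc_logP m_gt1 n_gt0)); rewrite INR_expn.
  by apply: pow_incr; split; [lra | have := leq_INR m_gt1; simpl; lra].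
have pow_gt0 : 0 < 2 ^ k by apply: pow_lt; lra.
have := ln_le_ln pow_gt0 pow_le; rewrite ln_pow; last lra.
exact: Rle_div_pos.
Qed.

Lemma exceptions_le (k m n : nat) (eps : R) : 0 < eps -> INR k <= / eps ->
  6 * / eps * / eps <= INR m -> INR (k * (6 * (n %/ m))) <= eps * INR n.
Proof.
move=> eps_gt0 k_le m_ge.
have q_le : INR (n %/ m) * INR m <= INR n.
  by rewrite -mult_INR; apply: leq_INR; exact: leq_trunc_div.
rewrite !mult_INR; have -> : INR 6 = 6 by simpl; lra.
set q := INR (n %/ m) in q_le *; have q_ge0 : 0 <= q by apply: pos_INR.
apply: (Rle_trans _ (/ eps * (6 * q))); first by apply: Rmult_le_compat_r; nra.
apply: (Rle_trans _ (eps * (INR m * q))); last by nra.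
have -> : / eps * (6 * q) = eps * (6 * / eps * / eps * q) by field; lra.
by apply: Rmult_le_compat_l; nra.
Qed.

Lemma critical_distance_ge (m n d : nat) (u : R) :
  (1 < m)%N -> (0 < n)%N -> 1 < u -> ln (INR m) <= 7 * ln u ->
  (0 < d)%N -> (2 ^ trunc_log m n <= d.+1)%N ->
  / 4 * Rpower 2 (/ 7 * (ln (INR n) / ln u)) <= INR d.
Proof.
move=> m_gt1 n_gt0 u_gt1 lnm_le d_gt0; set k := trunc_log m n => dk.
have lnu : 0 < ln u by rewrite -ln_1; apply: ln_increasing; lra.
have n_pos : 0 < INR n by apply/lt_0_INR/ltP.
have n_lt : INR n < INR m ^ k.+1 by rewrite -INR_expn; apply/lt_INR/ltP/trunc_log_ltn.
have lnn : ln (INR n) < INR k.+1 * ln (INR m).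
  by rewrite -ln_pow; [apply: ln_increasing | apply/lt_0_INR/ltP; lia].
have : INR k.+1 * ln (INR m) <= INR k.+1 * (7 * ln u).
  by apply: Rmult_le_compat_l => //; apply: pos_INR.
set L := ln (INR n) / ln u.
have L_def : L * ln u = ln (INR n) by rewrite /L; field; lra.
move=> lnm_k; have L_lt : / 7 * L < INR k.+1 by nra.
have pk : INR (2 ^ k) <= INR d.+1 := leq_INR dk.
rewrite INR_expn (_ : INR 2 = 2) ?S_INR in pk; last by simpl; lra.
have d_ge1 : 1 <= INR d := leq_INR d_gt0.
have : Rpower 2 (/ 7 * L) <= 2 * 2 ^ k.
  by rewrite tech_pow_Rmult -Rpower_pow; [apply: Rle_Rpower; lra | lra].
lra.
Qed.

End RealBounds.

Theorem theorem2 :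
  exists c c' : R, (0 < c)%R /\ (0 < c')%R /\
  forall (n : nat) (eps : R), (3 <= n)%N ->
    (/ INR n <= eps)%R -> (eps <= / (ln (INR n) / ln 2))%R ->
    exists (e : rel 'I_n) (d : nat),
      simple_graph e /\ critical_distance e eps d /\
      (c' * Rpower 2 (c * (ln (INR n) / ln (/ eps))) <= INR d)%R.
Proof.
exists (/ 7)%R, (/ 4)%R; split; [lra | split; [lra |]] => n eps n_ge3 eps_ge eps_le.
have [eps_gt0 log2n_le] := inv_eps_ge_log2 n_ge3 eps_ge eps_le.
have u_ge : (3 / 2 <= / eps)%R := Rle_trans _ _ _ (log2_ge_3_2 n_ge3) log2n_le.
have [m [m_gt1 m_ge lnm_le]] := exists_base u_ge.
have n_gt0 : (0 < n)%N by apply: leq_trans n_ge3.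
have [e [d [e_simple d_gt0 d_ge e_dist]]] := exists_distance_uniform_graph m_gt1 n_gt0.
exists e, d; split=> //; split.
- move=> v; have [S [S_le S_dist]] := e_dist v; exists S; split=> //.
  apply: Rle_trans (leq_INR S_le) (exceptions_le _ eps_gt0 _ m_ge).
  exact: Rle_trans (trunc_log_le_log2 m_gt1 n_gt0) log2n_le.
- by apply: critical_distance_ge m_gt1 n_gt0 _ lnm_le d_gt0 d_ge; lra.
Qed.
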